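(* Let $s \in \{2,3\}$ and let $C_5 \rtimes_s C_4$ be the group generated by $x, y$ with relations $x^4 = 1$, $y^5 = 1$, $yx = xy^s$; let $H = \langle y \rangle$ and $N_i = x^iH$. Let $S$ be a sequence in $C_5 \rtimes_s C_4$ with $|S| = 7$. If all elements of $S$ belong to one coset $N_i$ with $i \in \{1,3\}$, then $S$ is not free of product-$1$ subsequences.
   Context: A sequence in a finite group $G$ is a finite list of elements of $G$, repetition allowed. A non-empty subsequence $(g_{n_1},\dots,g_{n_k})$ is a product-$1$ subsequence if $g_{\sigma(n_1)}\cdots g_{\sigma(n_k)} = 1$ for some permutation $\sigma$ of $\{n_1,\dots,n_k\}$; $S$ is free of product-$1$ subsequences if it has no such subsequence. *)

From mathcomp Require Import all_boot all_fingroup.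
Set Implicit Arguments. Unset Strict Implicit. Unset Printing Implicit Defensive.
Local Open Scope group_scope.

(* A sequence S (a list, repetitions allowed) has a product-1 subsequence if
   some non-empty subsequence (selected by a bit mask, so multiplicities are
   respected) can be reordered (perm_eq) so that the ordered product is 1. *)
Definition has_prod1_subseq (gT : finGroupType) (S : seq gT) : Prop :=
  exists (m : bitseq) (T : seq gT),
    mask m S != [::] /\ perm_eq (mask m S) T /\ \prod_(g <- T) g = 1.

Definition prod1_free (gT : finGroupType) (S : seq gT) : Prop :=
  ~ has_prod1_subseq S.

From mathcomp Require Import all_boot all_fingroup cyclic.

Set Implicit Arguments. Unset Strict Implicit. Unset Printing Implicit Defensive.

(* Write the elements of x^i H as x^i y^k and put t = s^i, so that t = 2 or 3
   (mod 5) and t^2 = -1 (mod 5). Pushing the powers of x to the left and using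
   x^4 = 1, x^i y^a x^i y^b x^i y^c x^i y^d = y^(((a t + b) t + c) t + d), so
   four elements of the coset multiply to 1 as soon as that number is divisible
   by 5. For a word a b a b it equals (a t + b)(t^2 + 1), always divisible by 5.
   Among 7 elements of the 5-element coset some element a is repeated; if the
   5 remaining ones are not distinct, a second repetition b gives a b a b,
   otherwise they exhaust the coset, and four suitable distinct exponents
   (depending on t mod 5) give a product-1 subsequence. *)

Lemma not_uniq_perm_dup (T : eqType) (s : seq T) :
  ~~ uniq s -> exists a s', perm_eq s [:: a, a & s'].
Proof.
elim: s => [|b s IHs] //=; rewrite negb_and negbK.
case: (boolP (b \in s)) => [bs _ | _ /= /IHs[a [s' ss']]].
  by exists b, (rem b s); rewrite perm_cons perm_to_rem.
exists a, (b :: s'); rewrite -(perm_cons b) in ss'.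
by apply: (perm_trans ss'); rewrite (perm_catCA [:: b] [:: a; a] s').
Qed.

Lemma double_pair_or_cover (T : eqType) (r s : seq T) :
  {subset s <= r} -> size r + 2 <= size s ->
  (exists a b, [/\ a \in s, b \in s &
     forall v, count_mem v [:: a; b; a; b] <= count_mem v s])
  \/ {subset r <= s}.
Proof.
move=> sr size_s.
have /not_uniq_perm_dup[a [s1 ss1]] : ~~ uniq s.
  apply: contraTN size_s => /uniq_leq_size/(_ sr) le_sr.
  by rewrite -ltnNge addn2 ltnS (leq_trans le_sr).
have s1r : {subset s1 <= r}.
  by move=> v s1v; apply: sr; rewrite (perm_mem ss1) !inE s1v !orbT.
have size_s1 : size r <= size s1.
  by rewrite -(leq_add2r 2) (leq_trans size_s) // (perm_size ss1) addn2.
have [uniq_s1 | /not_uniq_perm_dup[b [s2 ss2]]] := boolP (uniq s1).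
  right=> v rv; rewrite (perm_mem ss1) !inE.
  by rewrite (uniq_min_size uniq_s1 s1r size_s1).2 rv !orbT.
have ss : perm_eq s ([:: a; b; a; b] ++ s2).
  apply: (perm_trans ss1); rewrite /= perm_cons.
  apply: (@perm_trans _ [:: a, b, b & s2]); first by rewrite perm_cons.
  by rewrite (perm_catCA [:: a] [:: b] (b :: s2)).
left; exists a, b; rewrite !(perm_mem ss) !inE !eqxx !orbT; split=> // v.
by rewrite (seq.permP ss) count_cat leq_addr.
Qed.

(* Most significant digit first. *)
Definition nat_of_digits (t : nat) (w : seq nat) : nat :=
  foldl (fun n a => n * t + a) 0 w.

Lemma nat_of_digits_rcons t w a :
  nat_of_digits t (rcons w a) = nat_of_digits t w * t + a.
Proof. exact: foldl_rcons. Qed.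

Lemma nat_of_digits_mod d t w :
  nat_of_digits t w = nat_of_digits (t %% d) w %[mod d].
Proof.
elim/last_ind: w => [|w a IHw] //; rewrite !nat_of_digits_rcons.
by rewrite -modnDml -modnMm IHw modnMml modnDml.
Qed.

Lemma nat_of_digits_abab t a b :
  nat_of_digits t [:: a; b; a; b] = (a * t + b) * (t ^ 2 + 1).
Proof.
by rewrite /nat_of_digits /= mul0n add0n mulnDr muln1 -mulnn mulnA !mulnDl !addnA.
Qed.

Lemma dvdn5_sqrn_add1 t : t %% 5 \in [:: 2; 3] -> 5 %| t ^ 2 + 1.
Proof. by rewrite /dvdn -modnDml -modnXm !inE => /orP[] /eqP ->. Qed.

Lemma exists_uniq_digits_dvdn5 t : t %% 5 \in [:: 2; 3] ->
  exists w, [/\ uniq w, all (gtn 5) w, size w = 4 & 5 %| nat_of_digits t w].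
Proof.
(* Modulo t^2 = -1 the value of [:: a; b; c; d] is (c - a) t + (d - b). *)
rewrite !inE => /orP[] /eqP t5; [exists [:: 0; 4; 1; 2] | exists [:: 0; 2; 1; 4]];
  by rewrite /dvdn nat_of_digits_mod t5.
Qed.

Section CosetWords.

Local Open Scope group_scope.

Variables (gT : finGroupType) (x y : gT) (s : nat).

Lemma has_prod1_subseq_count (S T : seq gT) :
  T != [::] -> (forall g, count_mem g T <= count_mem g S)%N ->
  \prod_(g <- T) g = 1 -> has_prod1_subseq S.
Proof.
move=> T_nil /count_maskP[m _ TmS] prodT; exists m, T; split=> //.
  by rewrite -size_eq0 -(perm_size TmS) size_eq0.
by rewrite perm_sym.
Qed.

Lemma lcoset_cycle_sub :
  {subset x *: <[y]> <= [seq x * y ^+ k | k <- iota 0 #[y]]}.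
Proof.
move=> g; rewrite mem_lcoset => /cyclePmin[k lt_k_y /(canRL (mulKVg x)) ->].
by apply: map_f; rewrite mem_iota.
Qed.

Hypothesis yx : y * x = x * y ^+ s.

Lemma expy_mulx a : y ^+ a * x = x * y ^+ (a * s).
Proof.
elim: a => [|a IHa]; first by rewrite mul0n !expg0 mul1g mulg1.
by rewrite expgS -mulgA IHa mulgA yx -mulgA -expgD mulSn.
Qed.

Lemma expy_mulxn a j : y ^+ a * x ^+ j = x ^+ j * y ^+ (a * s ^ j).
Proof.
elim: j a => [|j IHj] a; first by rewrite expn0 muln1 !expg0 mul1g mulg1.
by rewrite expgS mulgA expy_mulx -mulgA IHj mulgA expnS mulnA.
Qed.

Lemma prod_coset_word i w :
  \prod_(k <- w) (x ^+ i * y ^+ k) = x ^+ (i * size w) * y ^+ nat_of_digits (s ^ i) w.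
Proof.
elim/last_ind: w => [|w a IHw]; first by rewrite big_nil muln0 !expg0 mulg1.
rewrite -cats1 big_cat big_seq1 IHw cats1 size_rcons nat_of_digits_rcons /=.
rewrite mulgA -(mulgA _ (y ^+ _)) expy_mulxn mulgA -expgD -mulgA -expgD.
by rewrite mulnS addnC.
Qed.

Lemma prod_coset_word_eq1 i w :
  (#[x] %| size w)%N -> (#[y] %| nat_of_digits (s ^ i) w)%N ->
  \prod_(k <- w) (x ^+ i * y ^+ k) = 1.
Proof.
rewrite prod_coset_word mulnC expgM !order_dvdn => /eqP-> /eqP->.
by rewrite expg1n mulg1.
Qed.

End CosetWords.

Section C5C4Coset.

Local Open Scope group_scope.

Variables (gT : finGroupType) (x y : gT) (s i : nat).
Hypotheses (yx : y * x = x * y ^+ s) (ox : #[x] = 4) (oy : #[y] = 5).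
Hypothesis si5 : (s ^ i %% 5 \in [:: 2; 3])%N.

Local Notation coset := [seq x ^+ i * y ^+ k | k <- iota 0 5].

Lemma prod_abab_coset a b :
  a \in coset -> b \in coset -> \prod_(g <- [:: a; b; a; b]) g = 1.
Proof.
move=> /mapP[ka _ ->] /mapP[kb _ ->].
rewrite -[[:: _; _; _; _]]/(map (fun k => x ^+ i * y ^+ k) [:: ka; kb; ka; kb]).
rewrite big_map (prod_coset_word_eq1 yx) ?ox ?oy // nat_of_digits_abab.
by rewrite dvdn_mull // dvdn5_sqrn_add1.
Qed.

Lemma exists_uniq_prod1_coset :
  exists T, [/\ T != [::], uniq T, {subset T <= coset} & \prod_(g <- T) g = 1].
Proof.
have [w [uniq_w w_lt5 size_w dvd_w]] := exists_uniq_digits_dvdn5 si5.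
have inj_w : {in w &, injective (fun k => x ^+ i * y ^+ k)}.
  move=> k l /(allP w_lt5) k_lt5 /(allP w_lt5) l_lt5 /mulgI/eqP.
  by rewrite eq_expg_mod_order oy !modn_small // => /eqP.
exists [seq x ^+ i * y ^+ k | k <- w]; split.
- by rewrite -size_eq0 size_map size_w.
- by rewrite map_inj_in_uniq.
- move=> g /mapP[k kw ->]; apply: (map_f (fun k => x ^+ i * y ^+ k)).
  by rewrite mem_iota; apply: (allP w_lt5).
- by rewrite big_map (prod_coset_word_eq1 yx) ?ox ?oy ?size_w.
Qed.

Lemma has_prod1_subseq_coset S :
  {subset S <= coset} -> size S = 7 -> has_prod1_subseq S.
Proof.
move=> S_coset size_S.
have size_coset : (size coset + 2 <= size S)%N by rewrite size_map size_iota size_S.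
have [[a [b [aS bS abab]]] | coset_S] := double_pair_or_cover S_coset size_coset.
  apply: has_prod1_subseq_count abab _ => //.
  exact: prod_abab_coset (S_coset a aS) (S_coset b bS).
have [T [T_nil uniq_T T_coset prodT]] := exists_uniq_prod1_coset.
apply: has_prod1_subseq_count T_nil _ prodT.
by apply: leq_uniq_count uniq_T _ => g /T_coset/coset_S.
Qed.

End C5C4Coset.

Theorem proposition2 (gT : finGroupType) (x y : gT) (s i : nat)
    (S : seq gT) :
  (s == 2) || (s == 3) ->
  #[x]%g = 4 -> #[y]%g = 5 -> (y * x = x * y ^+ s)%g ->
  all (fun g => g \in <<[set x; y]>>%g) S ->
  size S = 7 ->
  (i == 1) || (i == 3) ->
  all (fun g => g \in (x ^+ i *: <[y]>)%g) S ->
  ~ prod1_free S.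
Proof.
(* Membership in <<[set x; y]>> is implied by the coset hypothesis. *)
move=> s23 ox oy yx _ size_S i13 S_xiH; apply.
have si5 : s ^ i %% 5 \in [:: 2; 3].
  by case/orP: s23 => /eqP->; case/orP: i13 => /eqP->.
apply: (has_prod1_subseq_coset yx ox oy si5) size_S.
by move=> g /(allP S_xiH)/lcoset_cycle_sub; rewrite oy.
Qed.
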